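(* For the system (depending on the parameter $\alpha$) $$(u_{0,0}-u_{1,1})(v_{1,0}-v_{0,1})-\alpha+\beta=0,\qquad (v_{0,0}-v_{1,1})(u_{1,0}-u_{0,1})-\alpha+\beta=0,$$ the following is an extended symmetry: $$\frac{\partial u_{0,0}}{\partial \tau}=\frac{n}{v_{1,0}-v_{-1,0}},\qquad \frac{\partial v_{0,0}}{\partial \tau}=\frac{n}{u_{1,0}-u_{-1,0}},\qquad \frac{\partial\alpha}{\partial\tau}=-1.$$
   Context: Unknowns $u,v$ on $\mathbb Z^2$, $u_{i,j}=u(n+i,m+j)$, similarly $v$; $\alpha\neq\beta$ constants. Shifts $\mathcal S:n\mapsto n+1$, $\mathcal T:m\mapsto m+1$. For a system $\boldsymbol Q(\boldsymbol u_{0,0},\boldsymbol u_{1,0},\boldsymbol u_{0,1},\boldsymbol u_{1,1};\alpha)=\boldsymbol 0$ with $\boldsymbol u=(u,v)$ and Jacobians $\mathrm Q_{(p,q)}=\partial\boldsymbol Q/\partial\boldsymbol u_{p,q}$, a pair $(\boldsymbol M(n,m,[\boldsymbol u]),\xi)$ is an extended symmetry, written $\partial_\tau\boldsymbol u_{0,0}=\boldsymbol M$, $\partial_\tau\alpha=\xi$, if $\mathrm Q_{(0,0)}\boldsymbol M+\mathrm Q_{(1,0)}\mathcal S(\boldsymbol M)+\mathrm Q_{(0,1)}\mathcal T(\boldsymbol M)+\mathrm Q_{(1,1)}\mathcal S\mathcal T(\boldsymbol M)+\xi\,\partial_\alpha\boldsymbol Q=\boldsymbol 0$ holds on all solutions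 of the system. *)

From mathcomp Require Import all_boot all_order all_algebra.
Set Implicit Arguments. Unset Strict Implicit. Unset Printing Implicit Defensive.
Import Order.TTheory GRing.Theory Num.Theory.
Local Open Scope ring_scope.

Definition lat (R : Type) := int -> int -> R.

Section System.
Variable R : numFieldType.

Definition mx2 (a b c d : R) : 'M[R]_2 :=
  \matrix_(i < 2, j < 2)
    (if i == 0 :> nat then (if j == 0 :> nat then a else b)
     else (if j == 0 :> nat then c else d)).

Definition cv2 (x y : R) : 'cV[R]_2 :=
  \col_(i < 2) (if i == 0 :> nat then x else y).

Definition Qsys (beta alpha : R) (u00 v00 u10 v10 u01 v01 u11 v11 : R)
  : 'cV[R]_2 :=
  cv2 ((u00 - u11) * (v10 - v01) - alpha + beta)
      ((v00 - v11) * (u10 - u01) - alpha + beta).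

(* Jacobians Q_(p,q) = dQ/d(u_{p,q}, v_{p,q}) of Qsys (columns: d/du, d/dv),
   and dQ/dalpha. Q is polynomial, these are its partial derivatives. *)
Definition Q00 (u00 v00 u10 v10 u01 v01 u11 v11 : R) : 'M[R]_2 :=
  mx2 (v10 - v01) 0
      0 (u10 - u01).
Definition Q10 (u00 v00 u10 v10 u01 v01 u11 v11 : R) : 'M[R]_2 :=
  mx2 0 (u00 - u11)
      (v00 - v11) 0.
Definition Q01 (u00 v00 u10 v10 u01 v01 u11 v11 : R) : 'M[R]_2 :=
  mx2 0 (- (u00 - u11))
      (- (v00 - v11)) 0.
Definition Q11 (u00 v00 u10 v10 u01 v01 u11 v11 : R) : 'M[R]_2 :=
  mx2 (- (v10 - v01)) 0
      0 (- (u10 - u01)).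
Definition Qalpha : 'cV[R]_2 := cv2 (-1) (-1).

Definition is_solution (alpha beta : R) (u v : lat R) : Prop :=
  forall n m : int,
    Qsys beta alpha (u n m) (v n m) (u (n+1) m) (v (n+1) m)
         (u n (m+1)) (v n (m+1)) (u (n+1) (m+1)) (v (n+1) (m+1)) = 0.

(* Linearisation at lattice point (n,m) in direction (Mu,Mv) (lattice
   functions, so that S(M) = M at (n+1,m), etc.) with dalpha = xi:
   Q_(0,0) M + Q_(1,0) S(M) + Q_(0,1) T(M) + Q_(1,1) ST(M) + xi dQ/dalpha *)
Definition linearised (alpha beta : R) (u v Mu Mv : lat R) (xi : R)
  (n m : int) : 'cV[R]_2 :=
  let J (Q : R -> R -> R -> R -> R -> R -> R -> R -> 'M[R]_2) :=
      Q (u n m) (v n m) (u (n+1) m) (v (n+1) m)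
        (u n (m+1)) (v n (m+1)) (u (n+1) (m+1)) (v (n+1) (m+1)) in
  J Q00 *m cv2 (Mu n m) (Mv n m)
  + J Q10 *m cv2 (Mu (n+1) m) (Mv (n+1) m)
  + J Q01 *m cv2 (Mu n (m+1)) (Mv n (m+1))
  + J Q11 *m cv2 (Mu (n+1) (m+1)) (Mv (n+1) (m+1))
  + xi *: Qalpha.

End System.

From mathcomp Require Import all_boot all_order all_algebra.
From mathcomp Require Import ring.
Set Implicit Arguments. Unset Strict Implicit. Unset Printing Implicit Defensive.
Import Order.TTheory GRing.Theory Num.Theory.
Local Open Scope ring_scope.

(* Put c = alpha - beta. Each equation of the system says that the two
   diagonal differences of a quad multiply to c, e.g.
   (u_{0,0} - u_{1,1})(v_{1,0} - v_{0,1}) = c. Two such relations sharing a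
   factor give (v_{1,0} - v_{0,1})/(v_{1,0} - v_{-1,0})
   - (u_{0,0} - u_{1,1})/(u_{1,1} - u_{-1,1}) = 1 (quad_ratio). Each
   component of the linearised system is n times one instance of this
   identity, minus n+1 times another, plus 1 (from xi = -1), hence
   n - (n+1) + 1 = 0. *)

Section Symmetry.
Variable R : fieldType.
Implicit Types (c : R) (u v w : lat R).

Lemma quad_ratio c (A B C p q r : R) :
  c != 0 -> (A - B) * (p - q) = c -> (r - q) * (A - C) = c -> p != r ->
  (p - q) / (p - r) - (A - B) / (B - C) = 1.
Proof.
move=> c_neq0 eAp eAr p_neq_r.
have AC_neq0 : A - C != 0 by apply: contra_neq c_neq0; rewrite -eAr => ->; rewrite mulr0.
have pr_neq0 : p - r != 0 by rewrite subr_eq0.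
have cross : (p - r) * (A - C) = (p - q) * (B - C).
  have -> : (p - r) * (A - C) = (p - q) * (A - C) - (r - q) * (A - C) by ring.
  by rewrite eAr -eAp; ring.
have BC_neq0 : B - C != 0.
  by apply: contra_neq (mulf_neq0 pr_neq0 AC_neq0); rewrite cross => ->; rewrite mulr0.
have -> : (p - q) / (p - r) = (A - C) / (B - C).
  by apply/eqP; rewrite eqr_div // -cross mulrC.
by rewrite -mulrBl (_ : A - C - (A - B) = B - C) ?divff //; ring.
Qed.

Lemma flow_identity c (N A B C D p q r s : R) :
  c != 0 -> (A - B) * (p - q) = c -> (r - q) * (A - C) = c ->
  (D - B) * (p - s) = c -> p != r -> A != D ->
  (p - q) * (N / (p - r) - (N + 1) / (s - q))
  + (A - B) * ((N + 1) / (D - A) - N / (B - C)) + 1 = 0.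
Proof.
move=> c_neq0 eAp eAr eDs p_neq_r A_neq_D.
have lo := quad_ratio c_neq0 eAp eAr p_neq_r.
(* the same identity, with the roles of the two fields exchanged *)
have hi := quad_ratio c_neq0 (etrans (mulrC _ _) eAp) eDs A_neq_D.
rewrite -[D - A]opprB -[s - q]opprB !invrN.
transitivity (N * ((p - q) / (p - r) - (A - B) / (B - C))
  - (N + 1) * ((A - B) / (A - D) - (p - q) / (q - s)) + 1); first ring.
by rewrite lo hi; ring.
Qed.

Definition quad_rel c u v :=
  forall a b, (u a b - u (a+1) (b+1)) * (v (a+1) b - v a (b+1)) = c.

Definition flow w : lat R := fun n m => n%:~R / (w (n+1) m - w (n-1) m).

Lemma flow_component c u v n m :
  c != 0 -> quad_rel c u v -> quad_rel c v u ->
  v (n+1) m != v (n-1) m -> u (n+1+1) m != u n m ->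
  (v (n+1) m - v n (m+1)) * (flow v n m - flow v (n+1) (m+1))
  + (u n m - u (n+1) (m+1)) * (flow u (n+1) m - flow u n (m+1)) + 1 = 0.
Proof.
move=> c_neq0 quv qvu v_neq u_neq.
have eB := qvu (n-1) m; rewrite subrK in eB.
have eC := qvu (n+1) m; rewrite mulrC in eC.
rewrite /flow !addrK intrD.
by apply: flow_identity c_neq0 (quv n m) eB eC v_neq _; rewrite eq_sym.
Qed.
End Symmetry.

Section Linearisation.
Variable R : numFieldType.

Lemma is_solution_quad (alpha beta : R) u v :
  is_solution alpha beta u v ->
  quad_rel (alpha - beta) u v /\ quad_rel (alpha - beta) v u.
Proof.
move=> sol; split=> a b.
- have := congr1 (fun M : 'cV[R]_2 => M 0 0) (sol a b); rewrite !mxE /= => E.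
  by apply/eqP; rewrite -subr_eq0 -E; apply/eqP; ring.
- have := congr1 (fun M : 'cV[R]_2 => M 1 0) (sol a b); rewrite !mxE /= => E.
  by apply/eqP; rewrite -subr_eq0 -E; apply/eqP; ring.
Qed.

Lemma linearisedE (alpha beta : R) (u v Mu Mv : lat R) xi n m :
  linearised alpha beta u v Mu Mv xi n m =
  cv2 ((v (n+1) m - v n (m+1)) * (Mu n m - Mu (n+1) (m+1))
       + (u n m - u (n+1) (m+1)) * (Mv (n+1) m - Mv n (m+1)) - xi)
      ((u (n+1) m - u n (m+1)) * (Mv n m - Mv (n+1) (m+1))
       + (v n m - v (n+1) (m+1)) * (Mu (n+1) m - Mu n (m+1)) - xi).
Proof.
apply/matrixP => i j; rewrite !mxE /Q00 /Q10 /Q01 /Q11 /Qalpha /mx2 /cv2.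
rewrite !big_ord_recr !big_ord0 /= !mxE /=.
by case: ifP => _; ring.
Qed.

Lemma cv2_00 : cv2 0 0 = 0 :> 'cV[R]_2.
Proof. by apply/matrixP => i j; rewrite !mxE; case: ifP. Qed.

End Linearisation.

Theorem mainTheorem4 (R : numFieldType) (alpha beta : R) (u v : lat R) :
  alpha != beta ->
  is_solution alpha beta u v ->
  (forall n m : int, u (n+1) m != u (n-1) m) ->
  (forall n m : int, v (n+1) m != v (n-1) m) ->
  forall n m : int,
    linearised alpha beta u v
      (fun n m => n%:~R / (v (n+1) m - v (n-1) m))
      (fun n m => n%:~R / (u (n+1) m - u (n-1) m))
      (-1) n m = 0.
Proof.
move=> alpha_neq_beta sol u_neq v_neq n m.
have c_neq0 : alpha - beta != 0 by rewrite subr_eq0.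
have [quv qvu] := is_solution_quad sol.
have u_neq' := u_neq (n+1) m; have v_neq' := v_neq (n+1) m.
rewrite addrK in u_neq' v_neq'.
rewrite linearisedE !opprK.
rewrite (flow_component c_neq0 quv qvu (v_neq n m) u_neq').
by rewrite (flow_component c_neq0 qvu quv (u_neq n m) v_neq') cv2_00.
Qed.
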